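(* Let $K$ be a field, $v:K\to\Gamma\cup\{\infty\}$ a valuation with valuation ring $\mathcal O_v$ and maximal ideal $\mathbf m_v$, and $F^vK$ the associated filtration. Let $\mathcal I$ be an ideal of $K\langle X\rangle=K\langle X_1,\dots,X_n\rangle$ generated by a monic Gröbner basis $\mathcal G\subset\mathcal O_v\langle X\rangle$ (w.r.t. a monomial ordering $\prec$ on words), with $\mathrm{LM}(g)\neq 1$ for all $g\in\mathcal G$. Let $A=K\langle X\rangle/\mathcal I$ and $\Lambda=(\mathcal O_v\langle X\rangle+\mathcal I)/\mathcal I$. Then: (i) setting $F^v_\gamma A=\{\sum_i\lambda_i\bar w_i\mid\lambda_i\in F^v_\gamma K,\ \bar w_i\in\overline{N(\mathcal G)}\}$ gives an exhaustive $\Gamma$-filtration $F^vA$ of $A$ with $F^v_\gamma K=K\cap F^v_\gamma A$ for all $\gamma$; (ii) $F^vA$ is separated, and $1\in F^v_0A\setminus F^v_{<0}A$; (iii) $F^v_0A=\mathcal O_v\langle X\rangle/\langle\mathcal G\rangle\cong\Lambda$ and $F^v_{<0}A=\mathbf m_vF^v_0A=\mathbf m_v\Lambda$, so the associated graded algebra $G(A)$ has $G(A)_0=\Lambda/\mathbf m_v\Lambda$; (iv) $F^vA$ is strong, i.e. $F^v_{\gamma_1}A\cdot F^v_{\gamma_2}A=F^v_{\gamma_1+\gamma_2}A$ for all $\gamma_1,\gamma_2$, and $G(A)$ is strongly graded, i.e. $G(A)_{\gamma_1}G(A)_{\gamma_2}=G(A)_{\gamma_1+\gamma_2}$.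
   Context: $\Gamma$ is a totally ordered abelian group. A valuation of $K$ is a surjective map $v:K\to\Gamma\cup\{\infty\}$ with $v(a)=\infty\iff a=0$, $v(ab)=v(a)+v(b)$, $v(a+b)\ge\min(v(a),v(b))$. $\mathcal O_v=\{v\ge0\}$, $\mathbf m_v=\{v>0\}$. $F^v_\gamma K=\{\lambda\in K\mid v(\lambda)\ge-\gamma\}$. An exhaustive $\Gamma$-filtration of a ring $S$: additive subgroups $F_\gamma S$ with $S=\bigcup F_\gamma S$, $F_{\gamma_1}S\subseteq F_{\gamma_2}S$ for $\gamma_1<\gamma_2$, $F_\gamma SF_\tau S\subseteq F_{\gamma+\tau}S$, $1\in F_0S$; $F_{<\gamma}S=\bigcup_{\gamma'<\gamma}F_{\gamma'}S$; separated means each nonzero $s$ lies in some $F_\gamma S\setminus F_{<\gamma}S$; $G(S)=\bigoplus_\gamma F_\gamma S/F_{<\gamma}S$. A monomial ordering is a well-ordering on words in $X_1,\dots,X_n$ with $u\prec v\Rightarrow wus\prec wvs$ and $u,v\preceq uv$; $\mathrm{LM},\mathrm{LC}$ are leading word and coefficient; monic means all $\mathrm{LC}=1$; a monic Gröbner basis of $I$ is a monic $\mathcal G\subset I$ with every nonzero $f\in I$ having $\mathrm{LM}(f)$ divisible (as a subword) by some $\mathrm{LM}(g)$. $N(\mathcal G)$ is the set of words divisible by no $\mathrm{LM}(g)$, and $\overline{N(\mathcal G)}$ its image in $A$ (a $K$-basis of $A$). *)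

From HB Require Import structures.
From Stdlib Require List.
From mathcomp Require Import all_boot all_order all_algebra.
Set Implicit Arguments. Unset Strict Implicit. Unset Printing Implicit Defensive.
Import Order.TTheory GRing.Theory.
Local Open Scope ring_scope.

Definition ordered_group (G : zmodType) (leG : rel G) : Prop :=
  [/\ (forall a, leG a a),
      (forall a b, leG a b -> leG b a -> a = b),
      (forall a b c, leG a b -> leG b c -> leG a c),
      (forall a b, leG a b \/ leG b a)
    & (forall a b c, leG a b -> leG (a + c) (b + c))].

Definition ltG (G : zmodType) (leG : rel G) (a b : G) : Prop := a <> b /\ leG a b.

(* Gamma u {oo} represented by option Gamma, None = oo *)
Definition leGi (G : zmodType) (leG : rel G) (x y : option G) : Prop :=
  match x, y with
  | _, None => True
  | None, Some _ => False
  | Some a, Some b => leG a b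
  end.

Definition addGi (G : zmodType) (x y : option G) : option G :=
  match x, y with
  | Some a, Some b => Some (a + b)
  | _, _ => None
  end.

(* min(x,y) <= z, written out *)
Definition valuation (K : fieldType) (G : zmodType) (leG : rel G)
  (v : K -> option G) : Prop :=
  [/\ (forall a, v a = None <-> a = 0),
      (forall a b, v (a * b) = addGi (v a) (v b)),
      (forall a b, leGi leG (v a) (v (a + b)) \/ leGi leG (v b) (v (a + b)))
    & (forall x : option G, exists a, v a = x)].

Definition in_Ov (K : fieldType) (G : zmodType) (leG : rel G) (v : K -> option G) (a : K) : Prop := leGi leG (Some 0) (v a).
Definition in_mv (K : fieldType) (G : zmodType) (leG : rel G) (v : K -> option G) (a : K) : Prop :=
  leGi leG (Some 0) (v a) /\ v a <> Some 0.
Definition FK (K : fieldType) (G : zmodType) (leG : rel G) (v : K -> option G) (g : G) (a : K) : Prop :=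
  leGi leG (Some (- g)) (v a).

Definition word (n : nat) := seq 'I_n.
(* an element of K<X> is a finitely supported coefficient function on words *)
Definition ncp (K : fieldType) (n : nat) := word n -> K.

Definition finsupp (K : fieldType) n (f : ncp K n) : Prop :=
  exists s : seq (word n), forall w, f w != 0 -> w \in s.

Definition nc0 (K : fieldType) (n : nat) : ncp K n := fun _ => 0.
Definition nc1 (K : fieldType) (n : nat) : ncp K n := fun w => if w == [::] then 1 else 0.
Definition ncC (K : fieldType) (n : nat) (c : K) : ncp K n := fun w => if w == [::] then c else 0.
Definition ncmono (K : fieldType) (n : nat) (u : word n) : ncp K n := fun w => if w == u then 1 else 0.
Definition ncadd (K : fieldType) (n : nat) (f g : ncp K n) : ncp K n := fun w => f w + g w.
Definition ncsub (K : fieldType) (n : nat) (f g : ncp K n) : ncp K n := fun w => f w - g w.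
Definition ncscale (K : fieldType) (n : nat) (c : K) (f : ncp K n) : ncp K n := fun w => c * f w.
Definition ncmul (K : fieldType) (n : nat) (f g : ncp K n) : ncp K n :=
  fun w => \sum_(i < (size w).+1) f (take i w) * g (drop i w).
Definition ncsum (K : fieldType) (n : nat) (l : seq (ncp K n)) : ncp K n := foldr (@ncadd K n) (@nc0 K n) l.

Definition ncOv (K : fieldType) n (G : zmodType) (leG : rel G) (v : K -> option G) (f : ncp K n) : Prop :=
  finsupp f /\ forall w, in_Ov leG v (f w).

Definition ideal_gen (K : fieldType) n (Gb : ncp K n -> Prop) (f : ncp K n) : Prop :=
  exists l : seq (ncp K n * ncp K n * ncp K n),
    (forall t, List.In t l -> [/\ finsupp t.1.1, Gb t.1.2 & finsupp t.2]) /\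
    forall w, f w = ncsum [seq ncmul (ncmul t.1.1 t.1.2) t.2 | t <- l] w.

Definition ideal_gen_Ov (K : fieldType) n (G : zmodType) (leG : rel G) (v : K -> option G) (Gb : ncp K n -> Prop)
  (f : ncp K n) : Prop :=
  exists l : seq (ncp K n * ncp K n * ncp K n),
    (forall t, List.In t l -> [/\ ncOv leG v t.1.1, Gb t.1.2 & ncOv leG v t.2]) /\
    forall w, f w = ncsum [seq ncmul (ncmul t.1.1 t.1.2) t.2 | t <- l] w.

Definition leW n (lt : rel (word n)) (u w : word n) : bool := (u == w) || lt u w.

Definition monomial_ordering n (lt : rel (word n)) : Prop :=
  [/\ (forall u, ~~ lt u u),
      (forall u v w, lt u v -> lt v w -> lt u w),
      (forall u v, u != v -> lt u v || lt v u),
      well_founded (fun u v => lt u v)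
    & (forall u v w s, lt u v -> lt (w ++ u ++ s) (w ++ v ++ s))] /\
  (forall u v, leW lt u (u ++ v) /\ leW lt v (u ++ v)).

Definition is_LM (K : fieldType) n (lt : rel (word n)) (f : ncp K n) (w : word n) : Prop :=
  f w != 0 /\ forall u, f u != 0 -> leW lt u w.

Definition monic_GB (K : fieldType) n (lt : rel (word n)) (Gb : ncp K n -> Prop)
  (I : ncp K n -> Prop) : Prop :=
  (forall g, Gb g -> [/\ finsupp g, I g & exists w, is_LM lt g w /\ g w = 1]) /\
  (forall f w, finsupp f -> I f -> is_LM lt f w ->
     exists g u, [/\ Gb g, is_LM lt g u & infix u w]).

Definition inN (K : fieldType) n (lt : rel (word n)) (Gb : ncp K n -> Prop) (w : word n) : Prop :=
  forall g u, Gb g -> is_LM lt g u -> ~~ infix u w.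

(* ---------- the quotient A = K<X>/I, handled through representatives ---------- *)
Definition congI (K : fieldType) n (Gb : ncp K n -> Prop) (f h : ncp K n) : Prop :=
  ideal_gen Gb (ncsub f h).

Definition FA (K : fieldType) n (G : zmodType) (leG : rel G) (v : K -> option G) (lt : rel (word n))
  (Gb : ncp K n -> Prop) (g : G) (f : ncp K n) : Prop :=
  exists l : seq (K * word n),
    (forall t, List.In t l -> FK leG v g t.1 /\ inN lt Gb t.2) /\
    congI Gb f (ncsum [seq ncscale t.1 (ncmono K t.2) | t <- l]).

(* F^v_{<gamma} A = union of F^v_gamma' A, gamma' < gamma; always taken to contain 0
   (this only matters when Gamma is trivial) *)
Definition FAlt (K : fieldType) n (G : zmodType) (leG : rel G) (v : K -> option G) (lt : rel (word n))
  (Gb : ncp K n -> Prop) (g : G) (f : ncp K n) : Prop :=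
  congI Gb f (@nc0 K n) \/ exists g', ltG leG g' g /\ FA leG v lt Gb g' f.

(* The proof rests on normal forms.  Call an O_v-submodule S of K (for instance
   F^v_gamma K, O_v, m_v, or K itself) a coefficient domain.  Because every g in G
   is monic with coefficients in O_v, each step of the division algorithm applied to
   a polynomial with coefficients in S subtracts an S-multiple of a product a g b;
   hence every such polynomial is congruent, by an S-combination of such products,
   to an S-combination of normal words, i.e. words of N(G) (existence of normal
   forms).  The Groebner property makes the normal form of a class unique.  So a
   class lies in F^v_gamma A iff it has a representative with coefficients in
   F^v_gamma K, iff the coefficients of its normal form lie in F^v_gamma K.  All
   four parts of the theorem then follow from elementary properties of the
   valuation: closure of F^v_gamma K under sums and products (i), the minimum of v
   on the finitely many normal-form coefficients (ii), F^v_0 K = O_v and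
   F^v_{<0} K = m_v (iii), and division by an element of value -gamma1 (iv). *)

From Stdlib Require List.
From Stdlib Require Import Classical.
From mathcomp Require Import all_boot all_order all_algebra zify.
Set Implicit Arguments. Unset Strict Implicit. Unset Printing Implicit Defensive.
Import GRing.Theory.
Local Open Scope ring_scope.

Lemma InP (T : eqType) (x : T) (s : seq T) : reflect (List.In x s) (x \in s).
Proof.
elim: s => [|y s IH] /=; first by constructor.
rewrite inE; case: eqP => [->|ne] /=; first by constructor; left.
by apply: (iffP IH) => [|[E|//]]; [right | case: ne].
Qed.

Section FreeAlgebra.
Variables (K : fieldType) (n : nat).
Implicit Types (f g h p : ncp K n) (w : word n).

Lemma ncsum_cons p s w : ncsum (p :: s) w = p w + ncsum s w.
Proof. by []. Qed.

Lemma ncsum_cat (s1 s2 : seq (ncp K n)) w : ncsum (s1 ++ s2) w = ncsum s1 w + ncsum s2 w.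
Proof.
elim: s1 => [|p s IH]; first by rewrite /= /nc0 add0r.
by rewrite cat_cons !ncsum_cons IH addrA.
Qed.

Lemma ncsum_map_ext T (F G : T -> ncp K n) (l : seq T) w :
  (forall x, F x w = G x w) -> ncsum (map F l) w = ncsum (map G l) w.
Proof. by move=> FG; elim: l => [|x l IH] //; rewrite map_cons !ncsum_cons IH FG. Qed.

Lemma ncmul_ext f f' g g' : f =1 f' -> g =1 g' -> ncmul f g =1 ncmul f' g'.
Proof. by move=> Ef Eg w; apply: eq_bigr => i _; rewrite Ef Eg. Qed.

Lemma ncmul_scalel c f g w : ncmul (ncscale c f) g w = c * ncmul f g w.
Proof. by rewrite /ncmul mulr_sumr; apply: eq_bigr => i _; rewrite /ncscale mulrA. Qed.

Lemma ncmul0r g w : ncmul (@nc0 K n) g w = 0.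
Proof. by rewrite /ncmul big1 // => i _; rewrite /nc0 mul0r. Qed.

Lemma ncmulr0 g w : ncmul g (@nc0 K n) w = 0.
Proof. by rewrite /ncmul big1 // => i _; rewrite /nc0 mulr0. Qed.

Lemma ncmul_addl f h g w : ncmul (ncadd f h) g w = ncmul f g w + ncmul h g w.
Proof. by rewrite /ncmul -big_split; apply: eq_bigr => i _; rewrite /ncadd mulrDl. Qed.

Lemma ncmul_addr f h g w : ncmul g (ncadd f h) w = ncmul g f w + ncmul g h w.
Proof. by rewrite /ncmul -big_split; apply: eq_bigr => i _; rewrite /ncadd mulrDr. Qed.

Lemma ncmul_subl f h g w : ncmul (ncsub f h) g w = ncmul f g w - ncmul h g w.
Proof. by rewrite /ncmul -sumrB; apply: eq_bigr => i _; rewrite /ncsub mulrBl. Qed.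

Lemma ncmul_subr f h g w : ncmul g (ncsub f h) w = ncmul g f w - ncmul g h w.
Proof. by rewrite /ncmul -sumrB; apply: eq_bigr => i _; rewrite /ncsub mulrBr. Qed.

Lemma ncmul_sumr p s w : ncmul p (ncsum s) w = ncsum (map (ncmul p) s) w.
Proof.
elim: s w => [|q s IH] w; first by rewrite ncmulr0.
by rewrite map_cons ncsum_cons -IH -ncmul_addr.
Qed.

Lemma ncmul_suml p s w : ncmul (ncsum s) p w = ncsum (map (fun q => ncmul q p) s) w.
Proof.
elim: s w => [|q s IH] w; first by rewrite ncmul0r.
by rewrite map_cons ncsum_cons -IH -ncmul_addl.
Qed.

Lemma ncmul_neq0 f g w : ncmul f g w != 0 ->
  exists i, f (take i w) != 0 /\ g (drop i w) != 0.
Proof.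
case: (pickP (fun i : 'I_(size w).+1 => (f (take i w) != 0) && (g (drop i w) != 0)))
  => [i /andP[Hf Hg] _|none]; first by exists i.
rewrite /ncmul big1 ?eqxx // => i _.
by move/negbT: (none i); rewrite negb_and !negbK => /orP[]/eqP->; rewrite ?mul0r ?mulr0.
Qed.

Lemma ncmul_monoL_cat (a u : word n) f : ncmul (ncmono K a) f (a ++ u) = f u.
Proof.
have Hs : (size a < (size (a ++ u)).+1)%N by rewrite size_cat ltnS leq_addr.
rewrite /ncmul (bigD1 (Ordinal Hs)) //= /ncmono take_size_cat // drop_size_cat // eqxx mul1r.
rewrite big1 ?addr0 // => i /eqP ne; case: ifP; rewrite ?mul0r // => /eqP Ei.
case: ne; apply: val_inj => /=; move: (ltn_ord i) (congr1 size Ei); move: (nat_of_ord i) => k.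
by rewrite size_take_min size_cat ltnS => /minn_idPl ->.
Qed.

Lemma ncmul_monoR_cat (b u : word n) f : ncmul f (ncmono K b) (u ++ b) = f u.
Proof.
have Hs : (size u < (size (u ++ b)).+1)%N by rewrite size_cat ltnS leq_addr.
rewrite /ncmul (bigD1 (Ordinal Hs)) //= /ncmono take_size_cat // drop_size_cat // eqxx mulr1.
rewrite big1 ?addr0 // => i /eqP ne; case: ifP; rewrite ?mulr0 // => /eqP Ei.
case: ne; apply: val_inj => /=; move: (ltn_ord i) (congr1 size Ei); move: (nat_of_ord i) => k.
rewrite size_drop size_cat; move: (size u) (size b) => x y; lia.
Qed.

Lemma ncmul_monoL_neq0 (a : word n) f w : ncmul (ncmono K a) f w != 0 ->
  exists u, w = a ++ u /\ f u != 0.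
Proof.
move=> /ncmul_neq0 [i [Ha Hf]]; exists (drop i w); split => //.
by move: Ha; rewrite /ncmono; case: ifP => [/eqP <- _|_]; rewrite ?eqxx // cat_take_drop.
Qed.

Lemma ncmul_monoR_neq0 (b : word n) f w : ncmul f (ncmono K b) w != 0 ->
  exists u, w = u ++ b /\ f u != 0.
Proof.
move=> /ncmul_neq0 [i [Hf Hb]]; exists (take i w); split => //.
by move: Hb; rewrite /ncmono; case: ifP => [/eqP <- _|_]; rewrite ?eqxx // cat_take_drop.
Qed.

Lemma ncmul_C (c : K) p w : ncmul (ncC c) p w = c * p w.
Proof.
rewrite (@ncmul_ext _ (ncscale c (ncmono K [::])) p p) //.
  by rewrite ncmul_scalel -[w]cat0s ncmul_monoL_cat.
by move=> u; rewrite /ncC /ncscale /ncmono; case: ifP; rewrite ?mulr1 ?mulr0.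
Qed.

Lemma sum_shift (G : nat -> K) j m : (j <= m)%N ->
  \sum_(k < (m - j).+1) G k = \sum_(i < m.+1) (if (j <= i)%N then G (i - j)%N else 0).
Proof.
elim: j m => [|j IH] m le_jm.
  by rewrite subn0; apply: eq_bigr => i _; rewrite subn0.
by case: m le_jm => [//|m] le_jm; rewrite [RHS]big_ord_recl /= add0r subSS IH.
Qed.

(* Associativity: both sides sum f(w1) g(w2) h(w3) over factorisations w = w1 w2 w3. *)
Lemma ncmulA f g h w : ncmul (ncmul f g) h w = ncmul f (ncmul g h) w.
Proof.
pose T (i j : nat) :=
  if (j <= i)%N then f (take j w) * g (take (i - j) (drop j w)) * h (drop i w) else 0.
transitivity (\sum_(i < (size w).+1) \sum_(j < (size w).+1) T i j).
  apply: eq_bigr => i _; have le_iw : (i <= size w)%N by rewrite -ltnS.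
  rewrite mulr_suml (big_ord_widen (size w).+1
    (fun j => f (take j (take i w)) * g (drop j (take i w)) * h (drop i w)));
    last by rewrite ltnS size_take_min geq_minr.
  rewrite big_mkcond; apply: eq_bigr => j _.
  rewrite /T size_takel // ltnS; case: ifP => // le_ji.
  by rewrite take_takel // take_drop subnK.
rewrite exchange_big; apply: eq_bigr => j _; have le_jw : (j <= size w)%N by rewrite -ltnS.
rewrite mulr_sumr size_drop.
rewrite (sum_shift (fun k => f (take j w) * (g (take k (drop j w)) * h (drop k (drop j w))))) //.
by apply: eq_bigr => i _; rewrite /T; case: ifP => // le_ji; rewrite drop_drop subnK // mulrA.
Qed.

Lemma finsupp_ext f g : f =1 g -> finsupp f -> finsupp g.
Proof. by move=> E [s Hs]; exists s => w; rewrite -E; apply: Hs. Qed.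

Lemma finsupp0 : finsupp (@nc0 K n).
Proof. by exists [::] => w; rewrite /nc0 eqxx. Qed.

Lemma finsupp_mono (a : word n) : finsupp (ncmono K a).
Proof. by exists [:: a] => w; rewrite /ncmono; case: ifP => [/eqP ->|]; rewrite ?eqxx ?inE. Qed.

Lemma finsupp_C (c : K) : finsupp (@ncC K n c).
Proof. by exists [:: [::]] => w; rewrite /ncC; case: ifP => [/eqP ->|]; rewrite ?eqxx ?inE. Qed.

Lemma finsupp_add f g : finsupp f -> finsupp g -> finsupp (ncadd f g).
Proof.
move=> [s1 H1] [s2 H2]; exists (s1 ++ s2) => w; rewrite mem_cat /ncadd => nz.
case: (eqVneq (f w) 0) => [f0|/H1 -> //].
by rewrite f0 add0r in nz; rewrite H2 ?orbT.
Qed.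

Lemma finsupp_scale c f : finsupp f -> finsupp (ncscale c f).
Proof.
move=> [s H]; exists s => w; rewrite /ncscale => nz; apply: H.
by apply: contraNneq nz => ->; rewrite mulr0.
Qed.

Lemma finsupp_sub f g : finsupp f -> finsupp g -> finsupp (ncsub f g).
Proof.
move=> Hf Hg; apply: (@finsupp_ext (ncadd f (ncscale (-1) g))).
  by move=> w; rewrite /ncadd /ncsub /ncscale mulN1r.
by apply: finsupp_add => //; apply: finsupp_scale.
Qed.

Lemma finsupp_mul f g : finsupp f -> finsupp g -> finsupp (ncmul f g).
Proof.
move=> [s1 H1] [s2 H2]; exists [seq x ++ y | x <- s1, y <- s2] => w /ncmul_neq0 [i [Hf Hg]].
by rewrite -(cat_take_drop i w); apply: allpairs_f; [apply: H1 | apply: H2].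
Qed.

End FreeAlgebra.

Section Ideal.
Variables (K : fieldType) (n : nat) (Gb : ncp K n -> Prop).
Implicit Types (f g h p : ncp K n).

Lemma ideal_ext f h : f =1 h -> ideal_gen Gb f -> ideal_gen Gb h.
Proof. by move=> E [l [Hl Hw]]; exists l; split => // w; rewrite -E. Qed.

Lemma ideal0 f : f =1 @nc0 K n -> ideal_gen Gb f.
Proof. by move=> E; exists [::]; split => // w; rewrite E. Qed.

Lemma ideal_add f h : ideal_gen Gb f -> ideal_gen Gb h -> ideal_gen Gb (ncadd f h).
Proof.
move=> [l1 [Hl1 Hw1]] [l2 [Hl2 Hw2]]; exists (l1 ++ l2); split.
  by move=> t Ht; case: (List.in_app_or _ _ _ Ht) => ?; [apply: Hl1 | apply: Hl2].
by move=> w; rewrite map_cat ncsum_cat /ncadd Hw1 Hw2.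
Qed.

Lemma ideal_mull p f : finsupp p -> ideal_gen Gb f -> ideal_gen Gb (ncmul p f).
Proof.
move=> Hp [l [Hl Hw]]; exists [seq (ncmul p t.1.1, t.1.2, t.2) | t <- l]; split.
  move=> _ /List.in_map_iff [t [<- /Hl [? ? ?]]].
  by split => //; apply: finsupp_mul.
move=> w; rewrite (@ncmul_ext _ _ p p f (ncsum [seq ncmul (ncmul t.1.1 t.1.2) t.2 | t <- l])) //.
rewrite ncmul_sumr -!map_comp; apply: ncsum_map_ext => t /=.
by rewrite -ncmulA; apply: ncmul_ext => // u; rewrite ncmulA.
Qed.

Lemma ideal_mulr p f : finsupp p -> ideal_gen Gb f -> ideal_gen Gb (ncmul f p).
Proof.
move=> Hp [l [Hl Hw]]; exists [seq (t.1.1, t.1.2, ncmul t.2 p) | t <- l]; split.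
  move=> _ /List.in_map_iff [t [<- /Hl [? ? ?]]].
  by split => //; apply: finsupp_mul.
move=> w; rewrite (@ncmul_ext _ _ f (ncsum [seq ncmul (ncmul t.1.1 t.1.2) t.2 | t <- l]) p p) //.
by rewrite ncmul_suml -!map_comp; apply: ncsum_map_ext => t /=; rewrite ncmulA.
Qed.

Lemma ideal_scale c f : ideal_gen Gb f -> ideal_gen Gb (ncscale c f).
Proof. by move/(ideal_mull (@finsupp_C _ n c)); apply: ideal_ext => w; rewrite ncmul_C. Qed.

Lemma ideal_sub f h : ideal_gen Gb f -> ideal_gen Gb h -> ideal_gen Gb (ncsub f h).
Proof.
move=> If Ih; apply: (@ideal_ext (ncadd f (ncscale (-1) h))).
  by move=> w; rewrite /ncadd /ncsub /ncscale mulN1r.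
by apply: ideal_add => //; apply: ideal_scale.
Qed.

Lemma congI_eq f h : f =1 h -> congI Gb f h.
Proof. by move=> E; apply: ideal0 => w; rewrite /ncsub E subrr. Qed.

Lemma congI_refl f : congI Gb f f.
Proof. exact: congI_eq. Qed.

Lemma congI_sym f h : congI Gb f h -> congI Gb h f.
Proof.
move/(ideal_scale (-1)); apply: ideal_ext => w.
by rewrite /ncscale /ncsub mulN1r opprB.
Qed.

Lemma congI_trans f g h : congI Gb f g -> congI Gb g h -> congI Gb f h.
Proof.
by move=> Hfg Hgh; apply: (ideal_ext _ (ideal_add Hfg Hgh)) => w; rewrite /ncadd /ncsub addrA subrK.
Qed.

Lemma congI_add f f' h h' : congI Gb f f' -> congI Gb h h' -> congI Gb (ncadd f h) (ncadd f' h').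
Proof.
move=> Hf Hh; apply: (ideal_ext _ (ideal_add Hf Hh)) => w.
by rewrite /ncadd /ncsub opprD addrACA.
Qed.

Lemma congI_sub f f' h h' : congI Gb f f' -> congI Gb h h' -> congI Gb (ncsub f h) (ncsub f' h').
Proof.
move=> Hf Hh; apply: (ideal_ext _ (ideal_sub Hf Hh)) => w.
by rewrite /ncsub !opprD addrACA.
Qed.

Lemma congI_scale c f h : congI Gb f h -> congI Gb (ncscale c f) (ncscale c h).
Proof. by move/(ideal_scale c); apply: ideal_ext => w; rewrite /ncscale /ncsub mulrBr. Qed.

Lemma congI_mul f f' h h' : finsupp f' -> finsupp h ->
  congI Gb f f' -> congI Gb h h' -> congI Gb (ncmul f h) (ncmul f' h').
Proof.
move=> Hf' Hh Hff' Hhh'.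
apply: (ideal_ext _ (ideal_add (ideal_mulr Hh Hff') (ideal_mull Hf' Hhh'))) => w.
by rewrite /ncadd /ncsub ncmul_subl ncmul_subr addrA subrK.
Qed.

End Ideal.

Section OrderedGroup.
Variables (G : zmodType) (leG : rel G).
Hypothesis HG : ordered_group leG.

Lemma leG_refl a : leG a a.
Proof. by case: HG. Qed.

Lemma leG_anti a b : leG a b -> leG b a -> a = b.
Proof. by case: HG => _ anti _ _ _; apply: anti. Qed.

Lemma leG_trans a b c : leG a b -> leG b c -> leG a c.
Proof. by case: HG => _ _ tr _ _; apply: tr. Qed.

Lemma leG_total a b : leG a b \/ leG b a.
Proof. by case: HG. Qed.

Lemma leG_addr a b c : leG a b -> leG (a + c) (b + c).
Proof. by case: HG => _ _ _ _; apply. Qed.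

Lemma leG_addl a b c : leG a b -> leG (c + a) (c + b).
Proof. by rewrite ![c + _]addrC; apply: leG_addr. Qed.

Lemma leG_add2 a b c d : leG a b -> leG c d -> leG (a + c) (b + d).
Proof. by move=> Hab Hcd; apply: (@leG_trans _ (b + c)); [apply: leG_addr | apply: leG_addl]. Qed.

Lemma leG_opp a b : leG a b -> leG (- b) (- a).
Proof.
move/(leG_addr (- a - b)).
by rewrite addrA subrr add0r addrC -addrA addNr addr0.
Qed.

Lemma leG_oppE a b : leG (- b) (- a) = leG a b.
Proof. by apply/idP/idP => [/leG_opp|/leG_opp //]; rewrite !opprK. Qed.

Lemma leGi_trans x y z : leGi leG x y -> leGi leG y z -> leGi leG x z.
Proof. by case: x => [a|]; case: y => [b|]; case: z => [c|] //=; apply: leG_trans. Qed.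

End OrderedGroup.

Section Valuation.
Variables (K : fieldType) (G : zmodType) (leG : rel G) (v : K -> option G).
Hypothesis HG : ordered_group leG.
Hypothesis Hv : valuation leG v.

Lemma v0 : v 0 = None.
Proof. by case: Hv => H _ _ _; apply/H. Qed.

Lemma v_neq0 (c : K) : c != 0 -> exists a, v c = Some a.
Proof.
case: Hv => H _ _ _ nz; case E: (v c) => [a|]; first by exists a.
by move/H: E nz => ->; rewrite eqxx.
Qed.

Lemma vM (a b : K) : v (a * b) = addGi (v a) (v b).
Proof. by case: Hv. Qed.

Lemma v1 : v 1 = Some 0.
Proof.
have [a Ha] := v_neq0 (oner_neq0 K).
have := vM 1 1; rewrite mulr1 Ha /= => [[]] E.
by congr Some; apply: (addrI a); rewrite addr0.
Qed.

(* v(-1) = 0, since 2 v(-1) = v(1) = 0 in a totally ordered group. *)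
Lemma vN1 : v (-1) = Some 0.
Proof.
have [b Hb] : exists b, v (-1) = Some b by apply: v_neq0; rewrite oppr_eq0 oner_neq0.
rewrite Hb; have := vM (-1) (-1); rewrite mulrNN mulr1 v1 Hb /= => [[]] Hbb.
by case: (leG_total HG 0 b) => H; have := leG_addr HG b H; rewrite add0r -Hbb => H';
  [rewrite (leG_anti HG H H') | rewrite (leG_anti HG H' H)].
Qed.

Lemma vN (c : K) : v (- c) = v c.
Proof. by rewrite -mulN1r vM vN1; case: (v c) => //= a; rewrite add0r. Qed.

Lemma v_add x (c d : K) : leGi leG x (v c) -> leGi leG x (v d) -> leGi leG x (v (c + d)).
Proof.
case: Hv => _ _ ultra _ Hc Hd.
by case: (ultra c d) => H; [apply: (leGi_trans HG Hc H) | apply: (leGi_trans HG Hd H)].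
Qed.

(* O_v-submodules of K: the coefficient domains of the normal-form argument. *)
Definition Ov_submodule (S : K -> Prop) : Prop :=
  [/\ S 0, (forall x y, S x -> S y -> S (x + y)), (forall x, S x -> S (- x))
    & (forall a x, in_Ov leG v a -> S x -> S (a * x))].

Lemma FK_submodule gm : Ov_submodule (FK leG v gm).
Proof.
split; rewrite /FK.
- by rewrite v0.
- by move=> x y; apply: v_add.
- by move=> x; rewrite vN.
- rewrite /in_Ov => a x; rewrite vM; case: (v a) => [a'|] //=; case: (v x) => [x'|] //=.
  by move=> Ha Hx; rewrite -(add0r (- gm)); apply: leG_add2.
Qed.

Lemma FK0_Ov (c : K) : FK leG v 0 c <-> in_Ov leG v c.
Proof. by rewrite /FK /in_Ov oppr0. Qed.

Lemma Ov_submodule_Ov : Ov_submodule (in_Ov leG v).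
Proof.
have [H0 Hadd Hopp Hmul] := FK_submodule 0.
split; first exact/FK0_Ov.
- by move=> x y /FK0_Ov Hx /FK0_Ov Hy; apply/FK0_Ov; apply: Hadd.
- by move=> x /FK0_Ov Hx; apply/FK0_Ov; apply: Hopp.
- by move=> a x Ha /FK0_Ov Hx; apply/FK0_Ov; apply: Hmul.
Qed.

Lemma Ov_submodule_K : Ov_submodule (fun _ => True).
Proof. by []. Qed.

Lemma Ov_submodule_zero : Ov_submodule (fun x => x = 0).
Proof. by split => [|x y -> ->|x ->|a x _ ->]; rewrite ?addr0 ?oppr0 ?mulr0. Qed.

(* The maximal ideal m_v is an O_v-submodule: v(x + y) = 0 with v x, v y >= 0
   would force v x = 0 or v y = 0. *)
Lemma Ov_submodule_mv : Ov_submodule (in_mv leG v).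
Proof.
split.
- by rewrite /in_mv v0.
- move=> x y [Hx nx] [Hy ny]; split; first exact: v_add.
  case: Hv => _ _ ultra _; case: (ultra x y) => H E; rewrite E in H.
  + by move: Hx nx H; case: (v x) => [a|] //= H1 H2 H3; apply: H2; rewrite (leG_anti HG H3 H1).
  + by move: Hy ny H; case: (v y) => [a|] //= H1 H2 H3; apply: H2; rewrite (leG_anti HG H3 H1).
- by move=> x; rewrite /in_mv vN.
- move=> a x; rewrite /in_Ov /in_mv vM; case: (v a) => [a'|] //=; case: (v x) => [x'|] //=.
  move=> Ha [Hx nx]; split; first by rewrite -(add0r 0); apply: leG_add2.
  case=> E; apply: nx; congr Some; apply: (leG_anti HG _ Hx).
  by have := leG_addr HG x' Ha; rewrite add0r E.
Qed.

Lemma Ov1 : in_Ov leG v 1.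
Proof. by rewrite /in_Ov v1 /=; apply: leG_refl. Qed.

Lemma FK1 : FK leG v 0 1.
Proof. by rewrite /FK v1 /= oppr0 leG_refl. Qed.

Lemma FK0 gm : FK leG v gm 0.
Proof. by case: (FK_submodule gm). Qed.

Lemma FK_mul g1 g2 (c d : K) : FK leG v g1 c -> FK leG v g2 d -> FK leG v (g1 + g2) (c * d).
Proof.
rewrite /FK vM; case: (v c) => [c'|] //=; case: (v d) => [d'|] //=.
by move=> Hc Hd; rewrite opprD; apply: leG_add2.
Qed.

Lemma FK_mono g1 g2 (c : K) : leG g1 g2 -> FK leG v g1 c -> FK leG v g2 c.
Proof.
by move=> le12; rewrite /FK; case: (v c) => [c'|] //=; apply: leG_trans (leG_opp HG le12).
Qed.

Lemma FK_lt0_mv g (c : K) : ltG leG g 0 -> FK leG v g c -> in_mv leG v c.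
Proof.
move=> [ne le_g0]; rewrite /FK /in_mv; case: (v c) => [a|] //= le_ga.
have le_0g : leG 0 (- g) by rewrite -oppr0 leG_oppE.
split=> [|[a0]]; first exact: leG_trans le_0g le_ga.
by apply: ne; apply: (leG_anti HG le_g0); rewrite -leG_oppE // oppr0 -a0.
Qed.

Lemma mv_value_lt0 g (c : K) : in_mv leG v c -> v c = Some (- g) -> ltG leG g 0.
Proof.
rewrite /in_mv => [[le_0c ne]] vc; move: le_0c ne; rewrite vc /= => le_0g ne.
split; first by move=> g0; apply: ne; rewrite g0 oppr0.
by rewrite -leG_oppE // oppr0.
Qed.

Lemma FK_div g1 g2 (a c : K) : v a = Some (- g1) -> FK leG v (g1 + g2) c -> FK leG v g2 (c / a).
Proof.
move=> Ha Hc; have a_nz : a != 0 by apply/eqP => a0; move: Ha; rewrite a0 v0.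
case: (eqVneq c 0) => [->|c_nz]; first by rewrite mul0r; apply: FK0.
have [y Hy] := v_neq0 (mulf_neq0 c_nz (invr_neq0 a_nz)).
have Ec : c = a * (c / a) by rewrite mulrC mulfVK.
move: Hc; rewrite {1}Ec /FK vM Ha Hy /= => /(leG_addl HG g1).
by rewrite opprD addrA subrr add0r addrA subrr add0r.
Qed.

Lemma finite_valuation_bound (s : seq K) :
  exists g, (forall c, c \in s -> FK leG v g c) /\
    ((forall c, c \in s -> c = 0) \/ exists c, [/\ c \in s, c != 0 & v c = Some (- g)]).
Proof.
elim: s => [|c s [g [Hall Hor]]].
  by exists 0; split; [move=> c; rewrite in_nil | left => c; rewrite in_nil].
have Hs_c : forall P : K -> Prop, P c -> (forall x, x \in s -> P x) -> forall x, x \in c :: s -> P x.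
  by move=> P Pc Ps x; rewrite inE => /orP[/eqP ->|/Ps].
case: (eqVneq c 0) => [c0|c_nz].
  exists g; split; first by apply: Hs_c => //; rewrite c0; apply: FK0.
  case: Hor => [Hz|[x [Hx x_nz Hvx]]]; [left; exact: Hs_c | right].
  by exists x; rewrite inE Hx orbT.
have [a Ha] := v_neq0 c_nz.
have Hc_top : forall g', leG (- g') a -> FK leG v g' c by move=> g' H; rewrite /FK Ha.
have take_c : (forall x, x \in s -> FK leG v (- a) x) -> exists g', (forall x, x \in c :: s ->
    FK leG v g' x) /\ ((forall x, x \in c :: s -> x = 0) \/
    exists x, [/\ x \in c :: s, x != 0 & v x = Some (- g')]).
  move=> Hs; exists (- a); split; last by right; exists c; rewrite inE eqxx opprK.
  by apply: Hs_c => //; apply: Hc_top; rewrite opprK leG_refl.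
case: Hor => [Hz|[x [Hx x_nz Hvx]]].
  by apply: take_c => x /Hz ->; apply: FK0.
case: (leG_total HG a (- g)) => le_ag.
  apply: take_c => y /Hall; rewrite /FK opprK; case: (v y) => //= b; exact: leG_trans.
exists g; split; last by right; exists x; rewrite inE Hx orbT.
exact: Hs_c (Hc_top _ le_ag) Hall.
Qed.

End Valuation.

Section WordOrder.
Variables (n : nat) (lt : rel (word n)).

Definition strict_total : Prop :=
  [/\ (forall u, ~~ lt u u), (forall u v w, lt u v -> lt v w -> lt u w)
    & (forall u v, u != v -> lt u v || lt v u)].

Lemma monomial_ordering_total : monomial_ordering lt -> strict_total.
Proof. by case=> [[]]. Qed.

Hypothesis Hst : strict_total.

Lemma leW_trans u v w : leW lt u v -> leW lt v w -> leW lt u w.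
Proof.
case: Hst => _ tr _ /orP[/eqP -> //|H1] /orP[/eqP <-|H2]; rewrite /leW ?H1 ?orbT //.
by rewrite (tr _ _ _ H1 H2) orbT.
Qed.

Lemma leW_anti u v : leW lt u v -> leW lt v u -> u = v.
Proof.
case: Hst => irr tr _ /orP[/eqP //|H1] /orP[/eqP //|H2].
by have := irr u; rewrite (tr _ _ _ H1 H2).
Qed.

Lemma leW_lt u v : leW lt u v -> u != v -> lt u v.
Proof. by move=> /orP[/eqP ->|//]; rewrite eqxx. Qed.

Lemma max_exists (P : word n -> Prop) (s : seq (word n)) :
  (forall u, P u -> u \in s) -> (exists u, P u) ->
  exists m, P m /\ forall u, P u -> leW lt u m.
Proof.
case: Hst => _ _ tot; elim: s P => [|x s IH] P Ps [u0 Pu0]; first by have := Ps u0 Pu0.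
case: (classic (exists u, P u /\ u != x)) => [Hex|Hnex]; last first.
  have Px : forall u, P u -> u = x.
    by move=> u Pu; apply: NNPP => /eqP ne; apply: Hnex; exists u.
  by exists x; split => [|u /Px ->]; [rewrite -(Px u0 Pu0) | rewrite /leW eqxx].
have [m [[Pm mx] mmax]] : exists m, (P m /\ m != x) /\ forall u, P u /\ u != x -> leW lt u m.
  by apply: IH Hex => u [Pu ux]; move: (Ps u Pu); rewrite inE (negbTE ux).
have upto_x : forall u, P u -> u != x -> leW lt u m by move=> u Pu ux; apply: mmax.
case: (classic (P x)) => Px; last first.
  by exists m; split => // u Pu; apply: upto_x => //; apply: contraPneq Px => <-.
have xm_ne : x != m by rewrite eq_sym.
case/orP: (tot x m xm_ne) => [xm|mx'].
- exists m; split => // u Pu; case: (eqVneq u x) => [->|]; last exact: upto_x.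
  by rewrite /leW xm orbT.
- exists x; split => // u Pu; case: (eqVneq u x) => [->|ux]; first by rewrite /leW eqxx.
  by apply: (leW_trans (upto_x u Pu ux)); rewrite /leW mx' orbT.
Qed.

End WordOrder.

Section NormalForms.
Variables (K : fieldType) (Gam : zmodType) (leG : rel Gam) (v : K -> option Gam).
Variables (n : nat) (lt : rel (word n)) (Gb : ncp K n -> Prop).
Implicit Types (f g h : ncp K n) (S : K -> Prop) (l : seq (K * word n)) (a b : word n).

Definition nf (l : seq (K * word n)) : ncp K n :=
  ncsum [seq ncscale t.1 (ncmono K t.2) | t <- l].

Definition nf_over (S : K -> Prop) (l : seq (K * word n)) : Prop :=
  forall t, List.In t l -> S t.1 /\ inN lt Gb t.2.

(* Elements sum_i c_i a_i g_i b_i with g_i in Gb, a_i, b_i words, c_i in S: the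
   part of the ideal reached by the division algorithm over S. *)
Definition ideal_span (S : K -> Prop) (f : ncp K n) : Prop :=
  exists l : seq (K * word n * ncp K n * word n),
   (forall t, List.In t l -> S t.1.1.1 /\ Gb t.1.2) /\
   forall w, f w = ncsum [seq ncmul (ncmul (ncscale t.1.1.1 (ncmono K t.1.1.2)) t.1.2)
                                    (ncmono K t.2) | t <- l] w.

Lemma nf_cons (t : K * word n) l w : nf (t :: l) w = t.1 * (if w == t.2 then 1 else 0) + nf l w.
Proof. by []. Qed.

Lemma nf_cat (l1 l2 : seq (K * word n)) w : nf (l1 ++ l2) w = nf l1 w + nf l2 w.
Proof. by rewrite /nf map_cat ncsum_cat. Qed.

Lemma nf_single (c : K) (u : word n) w : nf [:: (c, u)] w = if w == u then c else 0.
Proof. by rewrite nf_cons /= /nc0 addr0; case: ifP; rewrite ?mulr1 ?mulr0. Qed.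

Lemma nf_opp (l : seq (K * word n)) w : nf [seq (- t.1, t.2) | t <- l] w = - nf l w.
Proof.
elim: l => [|t l IH]; first by rewrite /= /nc0 oppr0.
by rewrite map_cons !nf_cons IH opprD mulNr.
Qed.

Lemma nf_supp (l : seq (K * word n)) w : nf l w != 0 -> exists t, List.In t l /\ t.2 = w.
Proof.
elim: l => [|t l IH]; first by rewrite /= /nc0 eqxx.
rewrite nf_cons; case: (eqVneq w t.2) => [E|_] H; first by exists t; split => //; left.
by rewrite mulr0 add0r in H; have [t' [H1 H2]] := IH H; exists t'; split => //; right.
Qed.

Lemma finsupp_nf (l : seq (K * word n)) : finsupp (nf l).
Proof. by exists [seq t.2 | t <- l] => w /nf_supp [t [/InP Ht <-]]; apply: map_f. Qed.

Lemma nf_over_cat S l1 l2 : nf_over S l1 -> nf_over S l2 -> nf_over S (l1 ++ l2).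
Proof. by move=> H1 H2 t Ht; case: (List.in_app_or _ _ _ Ht) => ?; [apply: H1 | apply: H2]. Qed.

Lemma nf_over_opp S l : (forall x, S x -> S (- x)) -> nf_over S l ->
  nf_over S [seq (- t.1, t.2) | t <- l].
Proof. by move=> Sopp Hl _ /List.in_map_iff [t [<- /Hl [St Nt]]]; split => //; apply: Sopp. Qed.

Lemma nf_coeff S (l : seq (K * word n)) : Ov_submodule leG v S ->
  (forall t, List.In t l -> S t.1) -> forall w, S (nf l w).
Proof.
move=> [S0 Sadd _ _] Hl w; elim: l Hl => [|t l IH] Hl //.
rewrite nf_cons; apply: Sadd; last by apply: IH => t' Ht'; apply: Hl; right.
by case: ifP => _; rewrite ?mulr1 ?mulr0 //; apply: Hl; left.
Qed.

Lemma nf_of_normal S f : finsupp f -> (forall w, S (f w)) ->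
  (forall u, f u != 0 -> inN lt Gb u) -> exists l, nf_over S l /\ nf l =1 f.
Proof.
move=> [s Hs] Sf Nf; pose r := [seq u <- undup s | f u != 0].
have nfE : forall w, nf [seq (f u, u) | u <- r] w = if w \in r then f w else 0.
  move=> w; have : uniq r by apply/filter_uniq/undup_uniq.
  elim: r => [|x r IH] //= /andP [xr ur]; rewrite nf_cons IH // inE /=.
  case: (eqVneq w x) => [->|] /=; first by rewrite (negbTE xr) mulr1 addr0.
  by rewrite mulr0 add0r.
exists [seq (f u, u) | u <- r]; split.
  move=> _ /List.in_map_iff [u [<- /InP]]; rewrite mem_filter => /andP[fu _].
  by split; [apply: Sf | apply: Nf].
move=> w; rewrite nfE mem_filter mem_undup; case: (eqVneq (f w) 0) => [->|fw] //.
by rewrite Hs.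
Qed.

Lemma ideal_span_ext S f h : f =1 h -> ideal_span S f -> ideal_span S h.
Proof. by move=> E [l [Hl Hw]]; exists l; split => // w; rewrite -E. Qed.

Lemma ideal_span_add S f h : ideal_span S f -> ideal_span S h -> ideal_span S (ncadd f h).
Proof.
move=> [l1 [Hl1 Hw1]] [l2 [Hl2 Hw2]]; exists (l1 ++ l2); split.
  by move=> t Ht; case: (List.in_app_or _ _ _ Ht) => ?; [apply: Hl1 | apply: Hl2].
by move=> w; rewrite map_cat ncsum_cat /ncadd Hw1 Hw2.
Qed.

Lemma ideal_span_gen S f : ideal_span S f -> ideal_gen Gb f.
Proof.
move=> [l [Hl Hw]].
exists [seq (ncscale t.1.1.1 (ncmono K t.1.1.2), t.1.2, ncmono K t.2) | t <- l]; split.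
  move=> _ /List.in_map_iff [t [<- /Hl [_ Gt]]]; split => //=; last exact: finsupp_mono.
  exact/finsupp_scale/finsupp_mono.
by move=> w; rewrite Hw -map_comp.
Qed.

Hypothesis HG : ordered_group leG.
Hypothesis Hv : valuation leG v.

Lemma ideal_span_Ov f : ideal_span (in_Ov leG v) f -> ideal_gen_Ov leG v Gb f.
Proof.
move=> [l [Hl Hw]].
have Ov_mono : forall a : word n, ncOv leG v (ncmono K a).
  move=> a; split=> [|w]; first exact: finsupp_mono.
  by rewrite /ncmono; case: ifP => _; [apply: Ov1 | rewrite /in_Ov (v0 Hv)].
exists [seq (ncscale t.1.1.1 (ncmono K t.1.1.2), t.1.2, ncmono K t.2) | t <- l]; split.
  move=> _ /List.in_map_iff [t [<- /Hl [Ct Gt]]]; split => //=.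
  split=> [|w]; first exact/finsupp_scale/finsupp_mono.
  by case: (Ov_submodule_Ov HG Hv) => _ _ _ Omul; apply: Omul => //; apply: (Ov_mono _).2.
by move=> w; rewrite Hw -map_comp.
Qed.

Hypothesis Hmo : monomial_ordering lt.
Hypothesis HGB : monic_GB lt Gb (ideal_gen Gb).
Hypothesis HGbOv : forall g, Gb g -> ncOv leG v g.

Let Hst : strict_total lt := monomial_ordering_total Hmo.

Lemma LM_exists f : finsupp f -> (exists w, f w != 0) -> exists m, is_LM lt f m.
Proof.
move=> [s Hs] Hex.
by have [m [Hm Hmax]] := max_exists Hst (P := fun w => f w != 0) Hs Hex; exists m.
Qed.

Lemma nf_over_K S l : nf_over S l -> nf_over (fun _ => True) l.
Proof. by move=> Hl t /Hl []. Qed.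

(* Uniqueness: a normal form lying in the ideal is zero, since its leading word
   would be divisible by the leading word of some element of Gb. *)
Lemma nf_ideal0 l : nf_over (fun _ => True) l -> ideal_gen Gb (nf l) -> nf l =1 @nc0 K n.
Proof.
move=> Hl HI w; apply/eqP; apply: contraT => nz.
have [m LMm] := LM_exists (finsupp_nf l) (ex_intro _ w nz).
have [g [u [Gg LMu um]]] := HGB.2 _ _ (finsupp_nf l) HI LMm.
have [t [Ht tm]] := nf_supp LMm.1.
by have := (Hl t Ht).2 g u Gg LMu; rewrite tm um.
Qed.

Lemma nf_unique S1 S2 l1 l2 : nf_over S1 l1 -> nf_over S2 l2 ->
  congI Gb (nf l1) (nf l2) -> nf l1 =1 nf l2.
Proof.
move=> H1 H2 HI w; set l := l1 ++ [seq (- t.1, t.2) | t <- l2].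
have El : ncsub (nf l1) (nf l2) =1 nf l by move=> u; rewrite nf_cat nf_opp.
have Hl : nf_over (fun _ => True) l.
  by apply: nf_over_cat; [apply: nf_over_K H1 | apply: nf_over_opp (nf_over_K H2)].
by apply/eqP; rewrite -subr_eq0; apply/eqP; rewrite -[_ - _]/(ncsub _ _ w) El;
  apply: nf_ideal0 => //; apply: ideal_ext HI.
Qed.

Lemma GB_lead_coeff g u : Gb g -> is_LM lt g u -> g u = 1.
Proof.
move=> Gg LMu; have [_ _ [w0 [LMw0 g1]]] := HGB.1 g Gg.
by rewrite -(leW_anti Hst (LMu.2 w0 LMw0.1) (LMw0.2 u LMu.1)).
Qed.

Definition sandwich (a : word n) (g : ncp K n) (b : word n) : ncp K n :=
  ncmul (ncmul (ncmono K a) g) (ncmono K b).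

Lemma sandwich_coeff a g b x : sandwich a g b (a ++ x ++ b) = g x.
Proof. by rewrite /sandwich catA ncmul_monoR_cat ncmul_monoL_cat. Qed.

Lemma sandwich_supp a g b w : sandwich a g b w != 0 -> exists x, w = a ++ x ++ b /\ g x != 0.
Proof.
move=> /ncmul_monoR_neq0 [y [-> /ncmul_monoL_neq0 [x [-> gx]]]].
by exists x; rewrite catA.
Qed.

Definition reducible (f : ncp K n) (u : word n) : Prop := f u != 0 /\ ~ inN lt Gb u.

(* One step of the division algorithm: cancel the largest reducible word m of f
   by subtracting f(m) a g b, where m = a LM(g) b.  All new words are below m. *)
Lemma reduce_step S f m : Ov_submodule leG v S -> finsupp f -> (forall w, S (f w)) ->
  reducible f m -> (forall u, reducible f u -> leW lt u m) ->
  exists f', [/\ finsupp f', (forall w, S (f' w)), (forall u, reducible f' u -> lt u m)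
               & ideal_span S (ncsub f f')].
Proof.
move=> [_ Sadd Sopp Smul] Hf Sf [fm mN] mmax; have [[_ _ _ _ compat] _] := Hmo.
have [g [u [Gg LMu /infixP [a [b Em]]]]] : exists g u, [/\ Gb g, is_LM lt g u & infix u m].
  by apply: NNPP => none; apply: mN => g u Gg LMu; apply/negP => um; apply: none; exists g, u.
pose A := sandwich a g b.
have A_Ov : forall w, in_Ov leG v (A w).
  move=> w; case: (eqVneq (A w) 0) => [->|/sandwich_supp [x [-> _]]].
    by rewrite /in_Ov (v0 Hv).
  by rewrite /A sandwich_coeff; apply: (HGbOv Gg).2.
exists (fun w => f w - f m * A w); split.
- apply: (@finsupp_ext _ _ (ncsub f (ncscale (f m) A))) => //.
  apply: finsupp_sub Hf _; apply/finsupp_scale/finsupp_mul; last exact: finsupp_mono.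
  exact: finsupp_mul (finsupp_mono _ _) (HGbOv Gg).1.
- by move=> w; apply: Sadd => //; apply: Sopp; rewrite mulrC; apply: Smul.
- have cancel_m : f m - f m * A m = 0.
    by rewrite /A Em sandwich_coeff (GB_lead_coeff Gg LMu) mulr1 subrr.
  move=> w [nz wN]; have wm : w != m by apply: contraNneq nz => ->; rewrite cancel_m.
  apply: (leW_lt _ wm); case: (eqVneq (f w) 0) => [fw0|fw]; last exact: mmax.
  have : A w != 0 by apply: contraNneq nz => ->; rewrite fw0 mulr0 subr0.
  move=> /sandwich_supp [x [-> gx]]; rewrite Em.
  case/orP: (LMu.2 x gx) => [/eqP -> | xu]; first by rewrite /leW eqxx.
  by rewrite /leW compat ?orbT.
- exists [:: (f m, a, g, b)]; split; first by move=> t [<-|//]; split; first apply: Sf.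
  move=> w; rewrite map_cons ncsum_cons /ncsub /= /nc0 addr0 opprB addrC subrK -ncmul_scalel.
  by apply: ncmul_ext => // y; rewrite ncmul_scalel.
Qed.

Definition has_nf (S : K -> Prop) (f : ncp K n) : Prop :=
  exists l, nf_over S l /\ ideal_span S (ncsub f (nf l)).

(* Existence of normal forms over S, by well-founded induction on the largest
   reducible word, iterating reduce_step. *)
Lemma normal_form_exists S f : Ov_submodule leG v S -> finsupp f -> (forall w, S (f w)) ->
  has_nf S f.
Proof.
move=> HS; have [[_ _ _ wf _] _] := Hmo.
have dispatch : forall f, finsupp f -> (forall w, S (f w)) ->
    (forall m, reducible f m -> (forall u, reducible f u -> leW lt u m) -> has_nf S f) ->
    has_nf S f.
  move=> {}f Hf Sf top; case: (classic (exists u, reducible f u)) => [Hex|none].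
    have [s Hs] := Hf.
    have [m [Rm mmax]] := max_exists Hst (P := reducible f) (fun u Ru => Hs u Ru.1) Hex.
    exact: top m Rm mmax.
  have normal : forall u, f u != 0 -> inN lt Gb u.
    by move=> u nz; apply: NNPP => uN; apply: none; exists u.
  have [l [Hl El]] := nf_of_normal Hf Sf normal.
  by exists l; split => //; exists [::]; split => // w; rewrite /ncsub El subrr.
have reduce : forall m f, finsupp f -> (forall w, S (f w)) ->
    reducible f m -> (forall u, reducible f u -> leW lt u m) -> has_nf S f.
  elim/(well_founded_ind wf) => m IH {}f Hf Sf Rm mmax.
  have [f' [Hf' Sf' below I]] := reduce_step HS Hf Sf Rm mmax.
  have [l [Hl I']] : has_nf S f'.
    by apply: dispatch => // m' Rm' m'max; apply: IH m' (below m' Rm') f' Hf' Sf' Rm' m'max.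
  exists l; split => //; apply: ideal_span_ext (ideal_span_add I I') => w.
  by rewrite /ncadd /ncsub addrA subrK.
by move=> Hf Sf; apply: dispatch => // m; apply: reduce.
Qed.

End NormalForms.

Section Filtration.
Variables (K : fieldType) (Gam : zmodType) (leG : rel Gam) (v : K -> option Gam).
Variables (n : nat) (lt : rel (word n)) (Gb : ncp K n -> Prop).
Hypothesis HG : ordered_group leG.
Hypothesis Hv : valuation leG v.
Hypothesis Hmo : monomial_ordering lt.
Hypothesis HGB : monic_GB lt Gb (ideal_gen Gb).
Hypothesis HGbOv : forall g, Gb g -> ncOv leG v g.
Implicit Types (f h p q : ncp K n) (S : K -> Prop) (l : seq (K * word n)) (gm : Gam).

Local Notation FAv := (FA leG v lt Gb).
Local Notation FAltv := (FAlt leG v lt Gb).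
Local Notation FKv := (FK leG v).

Lemma normal_form S f : Ov_submodule leG v S -> finsupp f -> (forall w, S (f w)) ->
  exists l, nf_over lt Gb S l /\ congI Gb f (nf l).
Proof.
move=> HS Hf Sf; have [l [Hl HI]] := normal_form_exists Hv Hmo HGB HGbOv HS Hf Sf.
by exists l; split => //; apply: ideal_span_gen HI.
Qed.

Lemma FA_intro gm f l : nf_over lt Gb (FKv gm) l -> congI Gb f (nf l) -> FAv gm f.
Proof. by exists l. Qed.

Lemma FA_char gm f :
  FAv gm f <-> exists p, [/\ finsupp p, (forall w, FKv gm (p w)) & congI Gb f p].
Proof.
split=> [[l [Hl Hc]] | [p [Hp Sp Hc]]].
  exists (nf l); split => //; first exact: finsupp_nf.
  by apply: nf_coeff (FK_submodule HG Hv gm) _ => t /Hl [].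
have [l [Hl Hcl]] := normal_form (FK_submodule HG Hv gm) Hp Sp.
exact: FA_intro Hl (congI_trans Hc Hcl).
Qed.

(* Conversely, by uniqueness of normal forms, the normal form of any element of
   F^v_gm A has all its coefficients in F^v_gm K. *)
Lemma FA_nf_coeff gm f S l : FAv gm f -> nf_over lt Gb S l -> congI Gb f (nf l) ->
  forall w, FKv gm (nf l w).
Proof.
move=> [l' [Hl' Hc']] Hl Hc w.
have l'_nf : nf_over lt Gb (FKv gm) l' by [].
rewrite (nf_unique Hmo HGB Hl l'_nf (congI_trans (congI_sym Hc) Hc')).
by move: w; apply: nf_coeff (FK_submodule HG Hv gm) _ => t /Hl' [].
Qed.

Lemma FA_cong gm f h : congI Gb f h -> FAv gm h -> FAv gm f.
Proof. by move=> Hfh [l [Hl Hc]]; exists l; split => //; apply: congI_trans Hfh Hc. Qed.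

Lemma FA0 gm : FAv gm (@nc0 K n).
Proof. by exists [::]; split => //; apply: congI_refl. Qed.

Lemma FA_sub gm f h : FAv gm f -> FAv gm h -> FAv gm (ncsub f h).
Proof.
move=> /FA_char [p [Hp Sp Hfp]] /FA_char [q [Hq Sq Hhq]]; apply/FA_char.
exists (ncsub p q); split; first exact: finsupp_sub.
  by case: (FK_submodule HG Hv gm) => _ Sadd Sopp _ w; apply: Sadd (Sopp _ _).
exact: congI_sub.
Qed.

Lemma FA_add gm f h : FAv gm f -> FAv gm h -> FAv gm (ncadd f h).
Proof.
move=> /FA_char [p [Hp Sp Hfp]] /FA_char [q [Hq Sq Hhq]]; apply/FA_char.
exists (ncadd p q); split; first exact: finsupp_add.
  by case: (FK_submodule HG Hv gm) => _ Sadd _ _ w; apply: Sadd.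
exact: congI_add.
Qed.

Lemma FA_sum gm (L : seq (ncp K n)) : (forall x, List.In x L -> FAv gm x) -> FAv gm (ncsum L).
Proof.
elim: L => [|x L IH] HL; first exact: FA0.
by apply: FA_add; [apply: HL; left | apply: IH => y Hy; apply: HL; right].
Qed.

Lemma FA_mono g1 g2 f : leG g1 g2 -> FAv g1 f -> FAv g2 f.
Proof.
by move=> le12 [l [Hl Hc]]; exists l; split => // t /Hl [Ct Nt]; split => //; apply: FK_mono le12 Ct.
Qed.

(* F^v A is multiplicative: products of representatives have coefficients
   sum_i c_i d_i with v(c_i d_i) = v(c_i) + v(d_i). *)
Lemma FA_mul g1 g2 f h : finsupp h -> FAv g1 f -> FAv g2 h -> FAv (g1 + g2) (ncmul f h).
Proof.
move=> Hh /FA_char [p [Hp Sp Hfp]] /FA_char [q [Hq Sq Hhq]]; apply/FA_char.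
exists (ncmul p q); split; first exact: finsupp_mul.
  move=> w; apply: (big_ind (FKv (g1 + g2))); first exact: FK0.
    by case: (FK_submodule HG Hv (g1 + g2)) => _ Sadd _ _; apply: Sadd.
  by move=> i _; apply: FK_mul.
exact: congI_mul.
Qed.

(* Splitting off a scalar of value -g1 from each normal-form coefficient shows
   that F^v_{g1+g2} A = F^v_{g1} A F^v_{g2} A. *)
Lemma FA_strong g1 g2 f :
  FAv (g1 + g2) f <->
  exists l : seq (ncp K n * ncp K n),
    (forall t, List.In t l -> [/\ finsupp t.1, finsupp t.2, FAv g1 t.1 & FAv g2 t.2]) /\
    congI Gb f (ncsum [seq ncmul t.1 t.2 | t <- l]).
Proof.
split=> [[l [Hl Hc]] | [l [Hl Hc]]]; last first.
  apply: FA_cong Hc _; apply: FA_sum => _ /List.in_map_iff [t [<- /Hl [_ H2 H3 H4]]].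
  exact: FA_mul.
have [_ _ _ onto] := Hv; have [a va] := onto (Some (- g1)).
have a_nz : a != 0 by apply/eqP => a0; move: va; rewrite a0 (v0 Hv).
exists [seq (ncC a, ncscale (t.1 / a) (ncmono K t.2)) | t <- l]; split.
  move=> _ /List.in_map_iff [t [<- /Hl [Ct Nt]]]; split => /=.
  - exact: finsupp_C.
  - exact/finsupp_scale/finsupp_mono.
  - apply/FA_char; exists (ncC a); split; first exact: finsupp_C.
      by move=> w; rewrite /ncC; case: ifP => _; [rewrite /FK va /= (leG_refl HG) | apply: FK0].
    exact: congI_refl.
  - apply: (@FA_intro _ _ [:: (t.1 / a, t.2)]).
      by move=> _ [<-|//]; split => //; apply: FK_div va Ct.
    by apply: congI_eq => w; rewrite nf_single /ncscale /ncmono; case: ifP; rewrite ?mulr1 ?mulr0.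
apply: (congI_trans Hc); apply: congI_eq => w; rewrite -map_comp; apply: ncsum_map_ext => t /=.
by rewrite ncmul_C /ncscale mulrA mulrCA mulfV // mulr1.
Qed.

(* Exhaustiveness: the finitely many normal-form coefficients have a common bound. *)
Lemma FA_exhaustive f : finsupp f -> exists gm, FAv gm f.
Proof.
move=> Hf; have [l [Hl Hc]] := normal_form (Ov_submodule_K leG v) Hf (fun _ => I).
have [gm [Hall _]] := finite_valuation_bound HG Hv [seq t.1 | t <- l].
exists gm, l; split => // t Ht; split; last exact: (Hl t Ht).2.
by apply: Hall; apply/map_f/InP.
Qed.

(* Separatedness: the least gm such that f is in F^v_gm A is attained, namely
   minus the minimum of v over the normal-form coefficients of f. *)
Lemma FA_separated f : finsupp f -> ~ congI Gb f (@nc0 K n) ->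
  exists gm, FAv gm f /\ ~ FAltv gm f.
Proof.
move=> Hf f_nz; have [l [Hl Hc]] := normal_form (Ov_submodule_K leG v) Hf (fun _ => I).
have [gm [Hall Hor]] := finite_valuation_bound HG Hv [seq nf l u | u <- [seq t.2 | t <- l]].
have in_coeffs : forall w, nf l w != 0 -> nf l w \in [seq nf l u | u <- [seq t.2 | t <- l]].
  by move=> w /nf_supp [t [/InP Ht <-]]; apply/map_f/map_f.
case: Hor => [Hz|[c [Hc1 c_nz vc]]].
  case: f_nz; apply: (congI_trans Hc); apply: congI_eq => w.
  by case: (eqVneq (nf l w) 0) => [->|/in_coeffs /Hz ->].
exists gm; split.
  apply/FA_char; exists (nf l); split => //; first exact: finsupp_nf.
  by move=> w; case: (eqVneq (nf l w) 0) => [->|/in_coeffs]; [apply: FK0 | apply: Hall].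
move=> [//|[g' [[ne le_g'] Hg']]].
case/mapP: Hc1 => u _ Ec; have := FA_nf_coeff Hg' Hl Hc u.
rewrite /FK -Ec vc /= leG_oppE // => le_gm; apply: ne.
exact: (leG_anti HG le_g' le_gm).
Qed.

Hypothesis HLM : forall g u, Gb g -> is_LM lt g u -> u <> [::].

Lemma empty_word_normal : inN lt Gb [::].
Proof. by move=> g u Gg LMu; rewrite infixs0; apply/eqP; apply: HLM LMu. Qed.

Lemma nf_over_const S (c : K) : S c -> nf_over lt Gb S [:: (c, [::])].
Proof. by move=> Sc _ [<-|//]; split => //; apply: empty_word_normal. Qed.

Lemma nf_const (c : K) : nf [:: (c, [::])] =1 @ncC K n c.
Proof. by move=> w; rewrite nf_single /ncC. Qed.

Lemma FA_C gm (c : K) : FKv gm c <-> FAv gm (@ncC K n c).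
Proof.
split=> [Fc | Fc].
  exact: (FA_intro (nf_over_const (S := FKv gm) Fc) (congI_eq Gb (fun w => esym (nf_const c w)))).
have := FA_nf_coeff Fc (@nf_over_const (fun _ => True) c I) _ [::].
by rewrite nf_const /ncC eqxx; apply; apply: congI_eq => w; rewrite nf_const.
Qed.

Lemma FA1 : FAv 0 (@nc1 K n).
Proof.
by apply/FA_cong/(FA_C 0 1).1; [apply: congI_eq => w; rewrite /nc1 /ncC | apply: (FK1 HG Hv)].
Qed.

Lemma one_notin_FAlt0 : ~ FAltv 0 (@nc1 K n).
Proof.
have one_nf : congI Gb (@nc1 K n) (nf [:: (1, [::])]) by apply: congI_eq => w; rewrite nf_const.
move=> [one0|[g' [[ne le_g'] Hg']]].
  have nil_nf : nf_over lt Gb (fun _ => True) [::] by [].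
  have one_nil : congI Gb (nf [:: (1, [::])]) (nf [::]) := congI_trans (congI_sym one_nf) one0.
  have := nf_unique Hmo HGB (@nf_over_const (fun _ => True) 1 I) nil_nf one_nil [::].
  by rewrite nf_single eqxx => /eqP; rewrite oner_eq0.
have := FA_nf_coeff Hg' (@nf_over_const (fun _ => True) 1 I) one_nf [::].
rewrite nf_single eqxx /FK (v1 Hv) /= -oppr0 leG_oppE // => le_0g.
by apply: ne; apply: (leG_anti HG le_g' le_0g).
Qed.

Lemma FA0_char f : FAv 0 f <-> exists p, ncOv leG v p /\ congI Gb f p.
Proof.
split=> [/FA_char [p [Hp Sp Hc]] | [p [[Hp Op] Hc]]].
  by exists p; split => //; split => // w; apply/FK0_Ov.
by apply/FA_char; exists p; split => // w; apply/FK0_Ov.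
Qed.

(* On O_v<X>, the ideal generated by Gb over K and over O_v coincide: the
   normal form of an element of O_v<X> is computed inside O_v<X>. *)
Lemma ideal_gen_Ov_iff p : ncOv leG v p -> (ideal_gen Gb p <-> ideal_gen_Ov leG v Gb p).
Proof.
move=> [Hp Op]; split=> [Ip | [l [Hl Hw]]]; last first.
  by exists l; split => // t /Hl [[? _] ? [? _]].
have [l [Hl HI]] := normal_form_exists Hv Hmo HGB HGbOv (Ov_submodule_Ov HG Hv) Hp Op.
have nf0 : nf l =1 @nc0 K n.
  apply: (nf_ideal0 Hmo HGB (nf_over_K Hl)).
  by apply: ideal_ext (ideal_sub Ip (ideal_span_gen HI)) => w; rewrite /ncsub opprB addrC subrK.
by apply: (ideal_span_Ov HG Hv); apply: ideal_span_ext HI => w; rewrite /ncsub nf0 subr0.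
Qed.

Lemma FAlt0_of_mv f P : finsupp P -> (forall w, in_mv leG v (P w)) -> congI Gb f P ->
  FAltv 0 f.
Proof.
move=> HP mP HfP; have [l [Hl Hc]] := normal_form (Ov_submodule_mv HG Hv) HP mP.
have [g [Hall Hor]] := finite_valuation_bound HG Hv [seq t.1 | t <- l].
case: Hor => [Hz|[c [/mapP [t /InP Ht Ec] _ vc]]].
  left; apply: (congI_trans (congI_trans HfP Hc)); apply: congI_eq => w.
  by move: w; apply: nf_coeff (Ov_submodule_zero leG v) _ => t /InP Ht; apply/Hz/map_f.
have vt : v t.1 = Some (- g) by rewrite -Ec.
right; exists g; split; first by apply: (mv_value_lt0 HG (Hl t Ht).1 vt).
exists l; split; last exact: congI_trans HfP Hc.
by move=> t' Ht'; split; [apply/Hall/map_f/InP | apply: (Hl t' Ht').2].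
Qed.

Lemma FAlt0_nf f : FAltv 0 f -> exists l, nf_over lt Gb (in_mv leG v) l /\ congI Gb f (nf l).
Proof.
move=> [f0|[g [lt_g0 [l [Hl Hc]]]]]; first by exists [::].
by exists l; split => // t /Hl [Ct Nt]; split => //; apply: FK_lt0_mv lt_g0 Ct.
Qed.

Lemma mv_combination (l : seq (K * ncp K n)) :
  (forall t, List.In t l -> in_mv leG v t.1 /\
     exists p, [/\ finsupp p, (forall w, in_Ov leG v (p w)) & congI Gb t.2 p]) ->
  exists P, [/\ finsupp P, (forall w, in_mv leG v (P w))
             & congI Gb (ncsum [seq ncscale t.1 t.2 | t <- l]) P].
Proof.
elim: l => [|t l IH] Hl.
  by exists (@nc0 K n); split; [exact: finsupp0 | case: (Ov_submodule_mv HG Hv) | exact: congI_refl].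
have [mt [p [Hp Op Hcp]]] := Hl t (or_introl erefl).
have [P [HP mP HcP]] := IH (fun t' Ht' => Hl t' (or_intror Ht')).
exists (ncadd (ncscale t.1 p) P); split.
- exact/finsupp_add/HP/finsupp_scale.
- case: (Ov_submodule_mv HG Hv) => _ madd _ mmul w.
  by apply: madd (mP w); rewrite /ncscale mulrC; apply: mmul.
- exact: congI_add (congI_scale _ Hcp) HcP.
Qed.

Lemma FAlt0_char_F0 f :
  FAltv 0 f <-> exists l : seq (K * ncp K n),
    (forall t, List.In t l -> [/\ in_mv leG v t.1, finsupp t.2 & FAv 0 t.2]) /\
    congI Gb f (ncsum [seq ncscale t.1 t.2 | t <- l]).
Proof.
split=> [/FAlt0_nf [l [Hl Hc]] | [l [Hl Hc]]].
  exists [seq (t.1, ncmono K t.2) | t <- l]; split; last by rewrite -map_comp.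
  move=> _ /List.in_map_iff [t [<- /Hl [mt Nt]]]; split => //; first exact: finsupp_mono.
  apply: (@FA_intro _ _ [:: (1, t.2)]); first by move=> _ [<-|//]; split => //; apply: (FK1 HG Hv).
  by apply: congI_eq => w; rewrite nf_single /ncmono.
have [|P [HP mP HcP]] := mv_combination (l := l); last exact: FAlt0_of_mv HP mP (congI_trans Hc HcP).
move=> t /Hl [mt _ /FA0_char [p [[Hp Op] Hcp]]]; split => //.
by exists p; split.
Qed.

Lemma FAlt0_char_Ov f :
  FAltv 0 f <-> exists l : seq (K * ncp K n),
    (forall t, List.In t l -> in_mv leG v t.1 /\ ncOv leG v t.2) /\
    congI Gb f (ncsum [seq ncscale t.1 t.2 | t <- l]).
Proof.
split=> [/FAlt0_nf [l [Hl Hc]] | [l [Hl Hc]]].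
  exists [seq (t.1, ncmono K t.2) | t <- l]; split; last by rewrite -map_comp.
  move=> _ /List.in_map_iff [t [<- /Hl [mt Nt]]]; split => //; split=> [|w].
    exact: finsupp_mono.
  by rewrite /ncmono /=; case: ifP => _; [apply: (Ov1 HG Hv) | rewrite /in_Ov (v0 Hv)].
have [|P [HP mP HcP]] := mv_combination (l := l); last exact: FAlt0_of_mv HP mP (congI_trans Hc HcP).
move=> t /Hl [mt [Hp Op]]; split => //.
by exists t.2; split => //; apply: congI_refl.
Qed.

Lemma graded_strong g1 g2 f : FAv (g1 + g2) f ->
  exists (l : seq (ncp K n * ncp K n)) (r : ncp K n),
    (forall t, List.In t l -> [/\ finsupp t.1, finsupp t.2, FAv g1 t.1 & FAv g2 t.2]) /\
    finsupp r /\ FAltv (g1 + g2) r /\ congI Gb f (ncadd (ncsum [seq ncmul t.1 t.2 | t <- l]) r).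
Proof.
move=> /FA_strong [l [Hl Hc]]; exists l, (@nc0 K n); do 2!split => //; first exact: finsupp0.
split; first by left; apply: congI_refl.
by apply: (congI_trans Hc); apply: congI_eq => w; rewrite /ncadd /nc0 addr0.
Qed.

End Filtration.

Theorem theorem6p3 (K : fieldType) (Gam : zmodType) (leG : rel Gam)
  (v : K -> option Gam) (n : nat) (lt : rel (word n)) (Gb : ncp K n -> Prop) :
  ordered_group leG ->
  valuation leG v ->
  monomial_ordering lt ->
  monic_GB lt Gb (ideal_gen Gb) ->
  (forall g, Gb g -> ncOv leG v g) ->
  (forall g u, Gb g -> is_LM lt g u -> u <> [::]) ->
  (* (i) exhaustive Gamma-filtration of A, with F_gamma K = K cap F_gamma A *)
  ((forall gm, FA leG v lt Gb gm (@nc0 K n) /\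
        forall f h, finsupp f -> finsupp h -> FA leG v lt Gb gm f ->
          FA leG v lt Gb gm h -> FA leG v lt Gb gm (ncsub f h)) /\
  [/\ (forall f, finsupp f -> exists gm, FA leG v lt Gb gm f),
      (forall g1 g2 f, ltG leG g1 g2 -> FA leG v lt Gb g1 f -> FA leG v lt Gb g2 f),
      (forall g1 g2 f h, finsupp f -> finsupp h ->
         FA leG v lt Gb g1 f -> FA leG v lt Gb g2 h ->
         FA leG v lt Gb (g1 + g2) (ncmul f h)),
      FA leG v lt Gb 0 (@nc1 K n)
    & (forall gm (c : K), FK leG v gm c <-> FA leG v lt Gb gm (@ncC K n c))]) /\
  (* (ii) separated, and 1 in F_0 A \ F_{<0} A *)
  ((forall f, finsupp f -> ~ congI Gb f (@nc0 K n) ->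
      exists gm, FA leG v lt Gb gm f /\ ~ FAlt leG v lt Gb gm f) /\
   (FA leG v lt Gb 0 (@nc1 K n) /\ ~ FAlt leG v lt Gb 0 (@nc1 K n))) /\
  (* (iii) F_0 A = O_v<X>/<G> = Lambda,  F_{<0} A = m_v F_0 A = m_v Lambda *)
  [/\ (forall f, finsupp f ->
         (FA leG v lt Gb 0 f <-> exists p, ncOv leG v p /\ congI Gb f p)),
      (forall p, ncOv leG v p -> (ideal_gen Gb p <-> ideal_gen_Ov leG v Gb p)),
      (forall f, finsupp f ->
         (FAlt leG v lt Gb 0 f <->
          exists l : seq (K * ncp K n),
            (forall t, List.In t l ->
               [/\ in_mv leG v t.1, finsupp t.2 & FA leG v lt Gb 0 t.2]) /\
            congI Gb f (ncsum [seq ncscale t.1 t.2 | t <- l])))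
    & (forall f, finsupp f ->
         (FAlt leG v lt Gb 0 f <->
          exists l : seq (K * ncp K n),
            (forall t, List.In t l -> in_mv leG v t.1 /\ ncOv leG v t.2) /\
            congI Gb f (ncsum [seq ncscale t.1 t.2 | t <- l])))] /\
  (* (iv) F^v A is strong and G(A) is strongly graded *)
  ((forall g1 g2 f, finsupp f ->
      (FA leG v lt Gb (g1 + g2) f <->
       exists l : seq (ncp K n * ncp K n),
         (forall t, List.In t l ->
            [/\ finsupp t.1, finsupp t.2, FA leG v lt Gb g1 t.1 & FA leG v lt Gb g2 t.2]) /\
         congI Gb f (ncsum [seq ncmul t.1 t.2 | t <- l]))) /\
   (forall g1 g2 f, finsupp f -> FA leG v lt Gb (g1 + g2) f ->
      exists (l : seq (ncp K n * ncp K n)) (r : ncp K n),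
        (forall t, List.In t l ->
           [/\ finsupp t.1, finsupp t.2, FA leG v lt Gb g1 t.1 & FA leG v lt Gb g2 t.2]) /\
        finsupp r /\ FAlt leG v lt Gb (g1 + g2) r /\
        congI Gb f (ncadd (ncsum [seq ncmul t.1 t.2 | t <- l]) r))).
Proof.
move=> HG Hv Hmo HGB HGbOv HLM.
have FA1' := FA1 HG Hv Hmo HGB HLM.
split.
  split; first by move=> gm; split=> [|f h _ _]; [exact: FA0 | exact: (FA_sub HG Hv Hmo HGB HGbOv)].
  split.
  - by move=> f; apply: (FA_exhaustive HG Hv Hmo HGB HGbOv).
  - by move=> g1 g2 f [_]; apply: (FA_mono HG).
  - by move=> g1 g2 f h _; apply: (FA_mul HG Hv Hmo HGB HGbOv).
  - exact: FA1'.
  - exact: (FA_C HG Hv Hmo HGB HLM).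
split.
  split; first by move=> f; apply: (FA_separated HG Hv Hmo HGB HGbOv).
  by split; [exact: FA1' | exact: (one_notin_FAlt0 HG Hv Hmo HGB HLM)].
split.
  split=> [f _|p|f _|f _].
  - exact: (FA0_char HG Hv Hmo HGB HGbOv).
  - exact: (ideal_gen_Ov_iff HG Hv Hmo HGB HGbOv).
  - exact: (FAlt0_char_F0 HG Hv Hmo HGB HGbOv).
  - exact: (FAlt0_char_Ov HG Hv Hmo HGB HGbOv).
split=> [g1 g2 f _ | g1 g2 f _].
- exact: (FA_strong HG Hv Hmo HGB HGbOv).
- exact: (graded_strong HG Hv Hmo HGB HGbOv).
Qed.
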